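(* Let $d\ge 1$ and $c\ge 1$, let $\mathcal C$ be a finite collection of $c$-fat objects in $\mathbb R^d$, let $G$ be the intersection graph of $\mathcal C$, and let $t\ge 0$ be an integer. Then $\hat\beta_t(G)\le C_d\cdot c\cdot (t+1)^{2d}$, where $C_d$ is a constant depending only on $d$ (i.e. $\hat\beta_t(G)=O(c\,t^{2d})$).
   Context: An object is a bounded subset of $\mathbb R^d$. The size of an object is the side length of its smallest enclosing axis-parallel hypercube; a box of size $r$ is an axis-parallel hypercube of side length $r$. A collection $\mathcal C$ of objects in $\mathbb R^d$ is $c$-fat (for $c\ge 1$) if for every $r\ge 0$ and every box $B$ of size $r$ there is a set of at most $c$ points of $\mathbb R^d$ such that every object of $\mathcal C$ of size at least $r$ that intersects $B$ contains at least one of these points. The intersection graph of $\mathcal C$ has vertex set $\mathcal C$, two objects being adjacent iff they intersect. For an integer $t\ge 0$, a graph $H$ is a $t$-shallow minor ($t$-minor) of a graph $G$ if there are pairwise disjoint sets $V_v\subseteq V(G)$, $v\in V(H)$, each inducing a connected subgraph of $G$ of radius at most $t$, such that $uv\in E(H)$ if and only if some edge of $G$ joins $V_u$ and $V_v$. For a graph $H$, $\beta(H)$ is the minimum number of cliques partitioning $V(H)$; for $x\in V(H)$, $H_x$ is the subgraph induced by the closed neighborhood $N_H[x]$; $\tilde\beta(H)=\min_{x\in V(H)}\beta(H_x)$; and $\hat\beta_t(G)=\max\{\tilde\beta(H): H \text{ a nonempty } t\text{-minor of } G\}$. *)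

From HB Require Import structures.
From mathcomp Require Import all_boot.
From Stdlib Require Import Reals.
Set Implicit Arguments. Unset Strict Implicit. Unset Printing Implicit Defensive.

Definition point (d : nat) := 'I_d -> R.

Definition in_box d (a : point d) (s : R) (x : point d) : Prop :=
  forall i, (a i <= x i <= a i + s)%R.

Definition obj_bounded d (S : point d -> Prop) : Prop :=
  exists (a : point d) (s : R), (0 <= s)%R /\ forall x, S x -> in_box a s x.

(* "size S >= r": the smallest enclosing axis-parallel hypercube has side >= r,
   i.e. every enclosing box has side >= r (the minimum is attained). *)
Definition size_ge d (S : point d -> Prop) (r : R) : Prop :=
  forall (a : point d) (s : R), (0 <= s)%R ->
    (forall x, S x -> in_box a s x) -> (r <= s)%R.

Definition intersects d (S B : point d -> Prop) : Prop :=
  exists x, S x /\ B x.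

Definition fat_collection d (c : R) (T : finType) (obj : T -> point d -> Prop) : Prop :=
  forall (r : R) (a : point d), (0 <= r)%R ->
    exists ps : seq (point d), (INR (size ps) <= c)%R /\
      forall o : T, size_ge (obj o) r -> intersects (obj o) (in_box a r) ->
        exists p, List.In p ps /\ obj o p.

Definition igraph d (T : finType) (obj : T -> point d -> Prop) (x y : T) : Prop :=
  x <> y /\ exists p, obj x p /\ obj y p.

Fixpoint walk_in (T : finType) (adj : T -> T -> Prop) (S : {set T}) (k : nat)
    (x y : T) : Prop :=
  match k with
  | 0 => x = y /\ x \in S
  | k'.+1 => walk_in adj S k' x y \/
             exists z, walk_in adj S k' x z /\ adj z y /\ y \in S
  end.

Definition radius_le (T : finType) (adj : T -> T -> Prop) (S : {set T}) (t : nat) : Prop :=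
  exists v, v \in S /\ forall w, w \in S -> walk_in adj S t v w.

Definition shallow_minor (t : nat) (U : finType) (hadj : rel U)
    (T : finType) (gadj : T -> T -> Prop) : Prop :=
  exists V : U -> {set T},
    (forall u v, u != v -> [disjoint V u & V v]) /\
    (forall u, radius_le gadj (V u) t) /\
    (forall u v, u != v ->
       (hadj u v <-> exists a b, a \in V u /\ b \in V v /\ gadj a b)).

Definition clique_cover (U : finType) (hadj : rel U) (S : {set U}) (k : nat) : bool :=
  [exists f : {ffun U -> 'I_k}, [forall y, forall z,
     [&& y \in S, z \in S, f y == f z & y != z] ==> hadj y z]].

Lemma clique_cover_ex (U : finType) (hadj : rel U) (S : {set U}) :
  exists k, clique_cover hadj S k.
Proof.
exists #|U|; apply/existsP; exists [ffun y => enum_rank y].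
apply/forallP=> y; apply/forallP=> z; apply/implyP.
case/and4P=> _ _; rewrite !ffunE => /eqP E.
by rewrite (enum_rank_inj E) eqxx.
Qed.

Definition beta (U : finType) (hadj : rel U) (S : {set U}) : nat :=
  ex_minn (clique_cover_ex hadj S).

Definition closed_nbhd (U : finType) (hadj : rel U) (x : U) : {set U} :=
  x |: [set y | hadj x y].

Definition beta_tilde (U : finType) (hadj : rel U) : nat :=
  \big[minn/#|U|]_(x : U) beta hadj (closed_nbhd hadj x).

From HB Require Import structures.
From mathcomp Require Import all_boot zify.
From Stdlib Require Import Reals Lra Lia Classical ClassicalEpsilon.
Set Implicit Arguments. Unset Strict Implicit. Unset Printing Implicit Defensive.

(* Let H be a t-shallow minor with branch sets V_u, let r be the least, over
   the branch sets, of the size of their largest object, and let x be a vertex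
   attaining it.  Every object of V_x has diameter at most r, so walking in V_x
   from its centre keeps all of V_x within distance t r of a point p0.  A
   neighbour y of x has an object meeting V_x; walking through V_y from it to
   the centre of V_y and on to the largest object of V_y (of size >= r), the
   first object of size >= r met stays within (3t + 1) r of p0.  Covering the
   cube of that radius around p0 by (6t + 2)^d boxes of size r, c-fatness gives
   at most (6t + 2)^d c points piercing one such object for every neighbour,
   and neighbours whose objects share a piercing point are adjacent.  Hence
   N[x] splits into (6t + 2)^d c + 1 cliques. *)

Open Scope R_scope.

Section Geometry.

Variable d : nat.

Definition diam_le (S : point d -> Prop) (D : R) :=
  forall p q, S p -> S q -> forall i, Rabs (p i - q i) <= D.

Definition meets_ball (S : point d -> Prop) (p0 : point d) (rho : R) :=
  exists q, S q /\ forall i, Rabs (q i - p0 i) <= rho.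

Lemma diam_le_in_box (S : point d -> Prop) a s D :
  (forall x, S x -> in_box a s x) -> s <= D -> diam_le S D.
Proof.
move=> hS hD p q hp hq i; have [h1 h2] := hS p hp i; have [h3 h4] := hS q hq i.
apply: Rabs_le; lra.
Qed.

Lemma obj_bounded_size (S : point d -> Prop) : obj_bounded S ->
  exists s0, 0 <= s0 /\ size_ge S s0 /\ forall D, s0 <= D -> diam_le S D.
Proof.
move=> [a0 [s1 [hs1 hS1]]].
(* s0 is the infimum of the sides of enclosing boxes, taken as - sup of - s *)
pose E y := exists a s, 0 <= s /\ (forall x, S x -> in_box a s x) /\ y = - s.
have [||m [m_ub m_lub]] := completeness E.
- by exists 0 => y [a [s [hs [_ ->]]]]; lra.
- by exists (- s1), a0, s1.
exists (- m); split; [|split].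
- suff : m <= 0 by lra.
  by apply: m_lub => y [a [s [hs [_ ->]]]]; lra.
- move=> a s hs hS; suff : - s <= m by lra.
  by apply: m_ub; exists a, s.
- move=> D hD p q hp hq i; apply: Rle_plus_epsilon => eps heps.
  have [a [s [hs [hS lt_s]]]] : exists a s, 0 <= s /\
      (forall x, S x -> in_box a s x) /\ s < - m + eps.
    apply: NNPP => hno; suff : m <= m - eps by lra.
    apply: m_lub => y [a [s [hs [hS ->]]]].
    suff : ~ s < - m + eps by lra.
    by move=> lt_s; apply: hno; exists a, s.
  apply: (diam_le_in_box hS _ hp hq i); lra.
Qed.

Lemma not_size_ge_diam_le (S : point d -> Prop) r : ~ size_ge S r -> diam_le S r.
Proof.
move=> hn; apply: NNPP => hD; apply: hn => a s hs hS.
apply: Rnot_lt_le => lt_sr; apply: hD; apply: diam_le_in_box hS _; lra.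
Qed.

Lemma size_ge_le (S : point d -> Prop) r s : size_ge S s -> r <= s -> size_ge S r.
Proof. by move=> h hr a s' hs' hS; have := h a s' hs' hS; lra. Qed.

Lemma meets_ball_le (S : point d -> Prop) p0 rho rho' :
  rho <= rho' -> meets_ball S p0 rho -> meets_ball S p0 rho'.
Proof. by move=> hr [q [hq hb]]; exists q; split => // i; apply: Rle_trans (hb i) hr. Qed.

Lemma meets_ball_step (S S' : point d -> Prop) p0 rho r :
  diam_le S r -> meets_ball S p0 rho -> intersects S S' ->
  meets_ball S' p0 (rho + r).
Proof.
move=> hd [q [hq hb]] [p [hp hp']]; exists p; split => // i.
have h1 := hd p q hp hq i; have h2 := hb i.
replace (p i - p0 i) with ((p i - q i) + (q i - p0 i)) by ring.
apply: Rle_trans (Rabs_triang _ _) _; lra.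
Qed.

Lemma interval_cell (n : nat) (r y : R) : (0 < n)%nat -> 0 <= r ->
  0 <= y <= INR n * r -> exists k, (k < n)%nat /\ INR k * r <= y <= INR k * r + r.
Proof.
elim: n => [//|[|n] IH] _ hr; rewrite S_INR Rmult_plus_distr_r Rmult_1_l => hy.
  by exists 0%nat; split => //; rewrite /= in hy |- *; lra.
case: (Rle_dec y (INR n.+1 * r)) => hyn.
  by have [k [hk hky]] := IH erefl hr (conj hy.1 hyn); exists k; split => //; lia.
by exists n.+1; split => //; lra.
Qed.

(* The cube of radius n r around p0 is tiled by the (2n)^d boxes of size r
   with these corners. *)
Definition grid_corner (p0 : point d) (r : R) (n : nat) (k : {ffun 'I_d -> 'I_(2 * n)}) : point d :=
  fun i => p0 i - INR n * r + INR (k i) * r.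

Lemma meets_ball_grid (S : point d -> Prop) p0 r n : 0 <= r -> (0 < n)%nat ->
  meets_ball S p0 (INR n * r) ->
  exists k, intersects S (in_box (@grid_corner p0 r n k) r).
Proof.
move=> hr hn [q [hq hqb]].
have cell i : exists k : 'I_(2 * n),
    INR k * r <= q i - (p0 i - INR n * r) <= INR k * r + r.
  have := Rle_abs (q i - p0 i); have := Rle_abs (- (q i - p0 i)).
  rewrite Rabs_Ropp => hq1 hq2; have hqi := hqb i.
  have hy : 0 <= q i - (p0 i - INR n * r) <= INR (2 * n) * r.
    by rewrite mult_INR Rmult_assoc [INR 2]/=; lra.
  have n2_gt0 : (0 < 2 * n)%nat by lia.
  have [k [hk hkb]] := interval_cell n2_gt0 hr hy.
  by exists (Ordinal hk).
have [kc hkc] := ClassicalEpsilon.choice _ cell.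
exists [ffun i => kc i], q; split => // i.
by rewrite /grid_corner ffunE; have := hkc i; lra.
Qed.

End Geometry.

Section Walks.

Variables (d : nat) (T : finType) (obj : T -> point d -> Prop).
Variables (p0 : point d) (r : R) (S : {set T}) (M : nat).
Hypothesis r_ge0 : 0 <= r.
Hypothesis near_small : forall z, z \in S ->
  meets_ball (obj z) p0 (INR M * r) -> diam_le (obj z) r.

Local Notation near z m := (meets_ball (obj z) p0 (INR m * r)).

Lemma near_le z (m m' : nat) : (m <= m')%nat -> near z m -> near z m'.
Proof.
move=> hm; apply: meets_ball_le; apply: Rmult_le_compat_r => //.
exact/le_INR/leP.
Qed.

Lemma near_step z z' m : z \in S -> (m <= M)%nat -> near z m ->
  igraph obj z z' -> near z' m.+1.
Proof.
move=> zS hm hz [_ hzz']; rewrite S_INR Rmult_plus_distr_r Rmult_1_l.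
apply: (meets_ball_step _ hz hzz'); exact: near_small zS (near_le hm hz).
Qed.

Lemma walk_in_mem k v w : walk_in (igraph obj) S k v w -> w \in S.
Proof.
elim: k w => [|k IH] w /=; first by case=> <-.
by case=> [/IH|[z [_ [_ ]]]].
Qed.

Lemma walk_near_fwd k v w m : walk_in (igraph obj) S k v w ->
  near v m -> (m + k <= M.+1)%nat -> near w (m + k).
Proof.
elim: k w => [|k IH] w /=; first by case=> -> _ h _; rewrite addn0.
case=> [hvw|[z [hvz [hzw _]]]] hv hk.
  by apply: (near_le (m := (m + k)%nat)); [lia | apply: IH hvw hv _; lia].
rewrite addnS; apply: near_step hzw; [exact: walk_in_mem hvz | lia |].
by apply: IH hvz hv _; lia.
Qed.

Lemma walk_near_bwd k v w m : walk_in (igraph obj) S k v w ->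
  near w m -> (m + k <= M.+1)%nat -> near v (m + k).
Proof.
elim: k v w m => [|k IH] v w m /=; first by case=> -> _ h _; rewrite addn0.
case=> [hvw|[z [hvz [[wz zw] wS]]]] hw hk.
  by apply: (near_le (m := (m + k)%nat)); [lia | apply: IH hvw hw _; lia].
have zw' : igraph obj w z.
  by case: zw => p [hp hp']; split; [by move=> e; apply: wz | exists p].
rewrite addnS -addSn; apply: IH hvz (near_step wS _ hw zw') _; lia.
Qed.

Lemma walk_from_empty k v w : walk_in (igraph obj) S k v w ->
  (forall p, ~ obj v p) -> w = v.
Proof.
elim: k w => [|k IH] w /=; first by case.
case=> [hvw|[z [hvz [[_ [p [hp _]]] _]]]] hv; first exact: IH hvw hv.
by move: hp; rewrite (IH z hvz hv) => /hv.
Qed.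

End Walks.

Lemma seq_argmax (A : eqType) (f : A -> R) (s : seq A) (x0 : A) : x0 \in s ->
  exists a, a \in s /\ forall b, b \in s -> f b <= f a.
Proof.
elim: s x0 => [//|y [|z s] IH] x0 _.
  by exists y; split; rewrite ?mem_head // => b; rewrite inE => /eqP ->; lra.
have [a [ha hb]] := IH z (mem_head z s).
case: (Rle_dec (f y) (f a)) => hya.
- exists a; split; first by rewrite in_cons ha orbT.
  by move=> b; rewrite in_cons => /orP [/eqP ->|/hb].
- exists y; split; first by rewrite in_cons eqxx.
  by move=> b; rewrite in_cons => /orP [/eqP ->|/hb]; lra.
Qed.

Lemma fin_argmax (A : finType) (f : A -> R) (P : {pred A}) (a0 : A) : a0 \in P ->
  exists a, a \in P /\ forall b, b \in P -> f b <= f a.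
Proof.
rewrite -mem_enum => /(seq_argmax f) [a [ha a_max]].
by exists a; split => [|b hb]; [rewrite -mem_enum | apply: a_max; rewrite mem_enum].
Qed.

Lemma In_of_mem (A : eqType) (x : A) (s : seq A) : x \in s -> List.In x s.
Proof. by elim: s => [//|y s IH]; rewrite in_cons => /orP [/eqP ->|/IH]; [left|right]. Qed.

Lemma size_length (A : Type) (s : seq A) : size s = length s.
Proof. by elim: s => //= a s ->. Qed.

Lemma length_concat_map_le (A B : Type) (f : A -> seq B) (l : seq A) (c : R) :
  (forall a, INR (size (f a)) <= c) ->
  INR (length (List.concat (List.map f l))) <= INR (length l) * c.
Proof.
move=> hf; elim: l => [|a l IH]; first by rewrite /=; lra.
rewrite [List.map _ _]/= [List.concat _]/= [length (a :: l)]/=.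
rewrite List.length_app plus_INR S_INR -size_length.
have := hf a; lra.
Qed.

Lemma INR_expn (m n : nat) : INR (expn m n) = INR m ^ n.
Proof. by elim: n => [|n IH]; [rewrite expn0 | rewrite expnS mult_INR IH]. Qed.

Section CliqueCover.

Variables (U : finType) (hadj : rel U).

Lemma clique_cover_of_labels (S : {set U}) (n : nat) (g : U -> nat) :
  (forall y, y \in S -> (g y <= n)%nat) ->
  (forall y z, y \in S -> z \in S -> y != z -> g y = g z -> hadj y z) ->
  clique_cover hadj S n.+1.
Proof.
move=> g_le g_adj; apply/existsP; exists [ffun y => inord (g y)].
apply/forallP=> y; apply/forallP=> z; apply/implyP => /and4P [yS zS + yz].
rewrite !ffunE => /eqP /(congr1 val) /=.
by rewrite !inordK ?ltnS ?g_le // => /(g_adj y z yS zS yz).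
Qed.

Lemma bigmin_le (F : U -> nat) (a : nat) (x : U) :
  (\big[minn/a]_(y : U) F y <= F x)%nat.
Proof.
rewrite unlock; have : x \in index_enum U := mem_index_enum x.
elim: (index_enum U) => [//|y s IH] /=.
rewrite in_cons => /orP [/eqP ->|/IH h]; first by rewrite geq_minl.
exact: leq_trans (geq_minr _ _) h.
Qed.

Lemma beta_tilde_le x n :
  clique_cover hadj (closed_nbhd hadj x) n -> (beta_tilde hadj <= n)%nat.
Proof.
move=> hn; apply: leq_trans (bigmin_le _ _ x) _.
by rewrite /beta; case: ex_minnP => k _ /(_ n hn).
Qed.

Lemma isolated_cover x : (forall y, y != x -> ~~ hadj x y) ->
  clique_cover hadj (closed_nbhd hadj x) 1.
Proof.
move=> hiso; apply: (clique_cover_of_labels (g := fun _ => 0%nat)) => // y z.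
have nbhd_x w : w \in closed_nbhd hadj x -> w = x.
  rewrite !inE => /orP [/eqP //|hw]; apply/eqP; apply: contraLR hw; exact: hiso.
by move=> /nbhd_x -> /nbhd_x ->; rewrite eqxx.
Qed.

End CliqueCover.

Section ShallowMinor.

Variables (d : nat) (c : R) (T : finType) (obj : T -> point d -> Prop).
Variables (U : finType) (hadj : rel U) (t : nat) (V : U -> {set T}).
Hypothesis fat : fat_collection c obj.
Hypothesis V_disj : forall u v, u != v -> [disjoint V u & V v].
Hypothesis V_rad : forall u, radius_le (igraph obj) (V u) t.
Hypothesis V_adj : forall u v, u != v ->
  (hadj u v <-> exists a b, a \in V u /\ b \in V v /\ igraph obj a b).

Lemma minor_adj_sym u v : u != v -> hadj u v -> hadj v u.
Proof.
move=> uv /(V_adj uv) [a [b [ha [hb [ab [p [hpa hpb]]]]]]].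
apply/(V_adj (v := u)); first by rewrite eq_sym.
by exists b, a; do 2!split => //; split; [move=> e; apply: ab | exists p].
Qed.

Variables (sz : T -> R) (m : U -> T) (x : U).
Hypothesis sz_spec : forall o, 0 <= sz o /\ size_ge (obj o) (sz o) /\
  forall D, sz o <= D -> diam_le (obj o) D.
Hypothesis m_max : forall u, m u \in V u /\ forall o, o \in V u -> sz o <= sz (m u).
Hypothesis x_min : forall u, sz (m x) <= sz (m u).

Local Notation r := (sz (m x)).
Let r_ge0 : 0 <= r := (sz_spec (m x)).1.

Lemma neighbour_big_object cx p0 y :
  (forall a, a \in V x -> walk_in (igraph obj) (V x) t cx a) -> obj cx p0 ->
  y != x -> hadj x y ->
  exists o, o \in V y /\ size_ge (obj o) r /\
    meets_ball (obj o) p0 (INR (3 * t + 1) * r).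
Proof.
move=> walk_x hp0 yx hxy; have xy : x != y by rewrite eq_sym.
have [a [b [ha [hb ab]]]] := (V_adj xy).1 hxy.
have small_x z : z \in V x -> meets_ball (obj z) p0 (INR t * r) -> diam_le (obj z) r.
  by move=> hz _; apply: (sz_spec z).2.2; exact: (m_max x).2.
have near_cx : meets_ball (obj cx) p0 (INR 0 * r).
  by exists p0; split => // i; rewrite Rminus_diag Rabs_R0 /=; lra.
have near_a := walk_near_fwd r_ge0 small_x (walk_x a ha) near_cx (leqnSn t).
have near_b := near_step r_ge0 small_x ha (leqnn t) near_a ab.
apply: NNPP => hno; have [cy [_ walk_y]] := V_rad y.
(* otherwise every object of V_y near p0 is small, and the walk b ~ cy ~ m y
   would keep m y, whose size is >= r, near p0 *)
have small_y z : z \in V y ->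
    meets_ball (obj z) p0 (INR (3 * t + 1) * r) -> diam_le (obj z) r.
  move=> hz hnear; apply: not_size_ge_diam_le => hsz.
  by apply: hno; exists z.
have le_cy : (t.+1 + t <= (3 * t + 1).+1)%nat by lia.
have near_cy := walk_near_bwd r_ge0 small_y (walk_y b hb) near_b le_cy.
have le_my : (t.+1 + t + t <= (3 * t + 1).+1)%nat by lia.
have near_my := walk_near_fwd r_ge0 small_y (walk_y _ (m_max y).1) near_cy le_my.
apply: hno; exists (m y); split; first exact: (m_max y).1.
split; first exact: size_ge_le (sz_spec (m y)).2.1 (x_min y).
by apply: (near_le r_ge0 _ near_my); lia.
Qed.

Local Notation n := (3 * t + 1)%nat.

Lemma neighbour_pierced cx p0 (ps : {ffun 'I_d -> 'I_(2 * n)} -> seq (point d)) y :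
  (forall a, a \in V x -> walk_in (igraph obj) (V x) t cx a) -> obj cx p0 ->
  (forall k o, size_ge (obj o) r ->
     intersects (obj o) (in_box (grid_corner p0 r k) r) ->
     exists p, List.In p (ps k) /\ obj o p) ->
  y != x -> hadj x y ->
  let pts := List.concat (List.map ps (enum {ffun 'I_d -> 'I_(2 * n)})) in
  exists j, (j < length pts)%nat /\ exists o, o \in V y /\ obj o (List.nth j pts p0).
Proof.
move=> walk_x hp0 pierce yx hxy pts.
have [o [hoy [hso near_o]]] := neighbour_big_object walk_x hp0 yx hxy.
have n_gt0 : (0 < n)%nat by lia.
have [k hk] := meets_ball_grid r_ge0 n_gt0 near_o.
have [p [hp hop]] := pierce k o hso hk.
have [j [hj hjp]] : exists j, (j < length pts)%coq_nat /\ List.nth j pts p0 = p.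
  apply: List.In_nth; apply/List.in_concat; exists (ps k); split => //.
  by apply: List.in_map; apply: In_of_mem; rewrite mem_enum.
by exists j; split; [apply/ltP | exists o; rewrite hjp].
Qed.

Lemma closed_nbhd_cover : exists K, clique_cover hadj (closed_nbhd hadj x) K /\
  INR K <= INR (expn (2 * n) d) * c + 1.
Proof.
have c_ge0 : 0 <= c.
  have [ps [hps _]] := fat (fun _ => 0) (Rle_refl 0).
  by apply: Rle_trans hps; apply: pos_INR.
have nbhd_adj y : y \in closed_nbhd hadj x -> y != x -> hadj x y.
  by rewrite !inE => /orP [/eqP ->|//]; rewrite eqxx.
have [cx [_ walk_x]] := V_rad x.
have [[p0 hp0] | empty_cx] := classic (exists p0, obj cx p0); last first.
  exists 1%nat; split; last first.
    by rewrite [INR 1]/=; have := pos_INR (expn (2 * n) d); nra.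
  apply: isolated_cover => y yx; apply/negP.
  move=> /(V_adj (u := x)) [|a [b [ha [_ [_ [p [hpa _]]]]]]]; first by rewrite eq_sym.
  have ea := walk_from_empty (walk_x a ha) (fun p h => empty_cx (ex_intro _ p h)).
  by apply: empty_cx; exists p; rewrite -ea.
have [ps hps] := ClassicalEpsilon.choice _
  (fun k : {ffun 'I_d -> 'I_(2 * n)} => fat (grid_corner p0 r k) r_ge0).
pose pts := List.concat (List.map ps (enum {ffun 'I_d -> 'I_(2 * n)})).
have pierced y : exists j, y \in closed_nbhd hadj x -> y != x ->
    (j < length pts)%nat /\ exists o, o \in V y /\ obj o (List.nth j pts p0).
  have [[hy yx]|hn] := classic (y \in closed_nbhd hadj x /\ y != x); last first.
    by exists 0%nat => hy yx; case: hn.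
  have [j hj] := neighbour_pierced walk_x hp0 (fun k => (hps k).2) yx (nbhd_adj y hy yx).
  by exists j.
have [g hg] := ClassicalEpsilon.choice _ pierced.
exists (length pts).+1; split.
  apply: (clique_cover_of_labels (g := fun y => if y == x then 0%nat else (g y).+1)).
    move=> y hy; have [//|yx] := eqVneq y x.
    exact: (hg y hy yx).1.
  move=> y z hy hz yz; have [e_yx _ | yx] := eqVneq y x.
    by subst y; apply: nbhd_adj hz _; rewrite eq_sym.
  have [e_zx _ | zx] := eqVneq z x.
    by subst z; apply: minor_adj_sym (nbhd_adj y hy yx); rewrite eq_sym.
  move=> -[e_g].
  have [_ [oy [hoy hpy]]] := hg y hy yx; have [_ [oz [hoz hpz]]] := hg z hz zx.
  apply/(V_adj yz); exists oy, oz; do 2!split => //; split.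
    by move=> e_o; move: hoz; rewrite -e_o (disjointFr (V_disj yz) hoy).
  by exists (List.nth (g y) pts p0); split => //; rewrite e_g.
rewrite S_INR; apply: Rplus_le_compat_r.
have := length_concat_map_le (enum {ffun 'I_d -> 'I_(2 * n)}) (fun k => (hps k).1).
by rewrite -(size_length (enum _)) -cardE card_ffun !card_ord.
Qed.

End ShallowMinor.

Lemma grid_bound (d t : nat) (c : R) : 1 <= c ->
  INR (expn (2 * (3 * t + 1)) d) * c + 1 <= (6 ^ d + 1) * c * (INR t + 1) ^ (2 * d)%nat.
Proof.
move=> c_ge1; set A := (INR t + 1) ^ (2 * d)%nat.
have t_ge0 := pos_INR t.
have A_ge1 : 1 <= A by apply: pow_R1_Rle; lra.
have grid_le : INR (expn (2 * (3 * t + 1)) d) <= 6 ^ d * A.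
  rewrite INR_expn; apply: Rle_trans (_ : _ <= (6 * (INR t + 1)) ^ d) _.
    apply: pow_incr; split; first exact: pos_INR.
    by rewrite mult_INR plus_INR mult_INR /=; lra.
  rewrite Rpow_mult_distr; apply: Rmult_le_compat_l; first by apply: pow_le; lra.
  by apply: Rle_pow; [lra | apply/leP; lia].
have six_ge0 : 0 <= 6 ^ d by apply: pow_le; lra.
nra.
Qed.

Close Scope R_scope.

Theorem theorem3p1 (d : nat) (hd : (1 <= d)%N) :
  exists Cd : R,
  forall (c : R) (T : finType) (obj : T -> point d -> Prop),
    (1 <= c)%R ->
    injective obj ->
    (forall o, obj_bounded (obj o)) ->
    fat_collection c obj ->
    forall (t : nat) (U : finType) (hadj : rel U),
      (0 < #|U|)%N ->
      shallow_minor t hadj (igraph obj) ->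
      (INR (beta_tilde hadj) <= Cd * c * (INR t + 1) ^ (2 * d))%R.
Proof.
exists (6 ^ d + 1)%R => c T obj c_ge1 _ bounded fat t U hadj U_gt0.
move=> [V [V_disj [V_rad V_adj]]].
have [sz sz_spec] := ClassicalEpsilon.choice _ (fun o => obj_bounded_size (bounded o)).
have largest u : exists o, o \in V u /\ forall o', o' \in V u -> (sz o' <= sz o)%R.
  by have [v [hv _]] := V_rad u; exact: fin_argmax hv.
have [m m_max] := ClassicalEpsilon.choice _ largest.
have [u0 _] := card_gt0P U_gt0.
have [x [_ x_max]] := fin_argmax (fun u => - sz (m u))%R (in_setT u0).
have x_min u : (sz (m x) <= sz (m u))%R by have := x_max u (in_setT u); lra.
have [K [cover K_le]] := closed_nbhd_cover fat V_disj V_rad V_adj sz_spec m_max x_min.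
apply: (Rle_trans _ _ _ _ (@grid_bound d t c c_ge1)).
by apply: Rle_trans K_le; apply/le_INR/leP; exact: beta_tilde_le cover.
Qed.
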